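(* Let $\mathbb{F}\in\{\mathbb{R},\mathbb{C}\}$ and $M>N$. Suppose $\Phi=\{\varphi_i\}_{i=1}^M$ is a Parseval frame for $\mathbb{F}^N$ and $\Psi=\{\psi_i\}_{i=1}^M$ is a Naimark complement of $\Phi$ (a Parseval frame for $\mathbb{F}^{M-N}$). Let $K\subseteq[M]$ with $|K|=k\leq N$ and $K^c=[M]\setminus K$. If $k\le M-N$, then for $i=1,\dots,M-N$, $$\sigma_i(\Psi_{K^c})=\begin{cases}1 & \text{if } 1\leq i\leq M-N-k,\\ \sigma_j(\Phi_K) & \text{if } i=M-N-k+j,\ 1\le j\le k.\end{cases}$$ If $k>M-N$, then $\sigma_i(\Phi_K)=1$ for $i=1,\dots,k-(M-N)$, and $\sigma_i(\Psi_{K^c})=\sigma_{i+k-(M-N)}(\Phi_K)$ for $i=1,\dots,M-N$.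
   Context: A Parseval frame for $\mathbb{F}^N$ is a family $\{\varphi_i\}_{i=1}^M\subseteq\mathbb{F}^N$ whose $N\times M$ matrix $\Phi$ (columns $\varphi_i$) satisfies $\Phi\Phi^*=I$. A Naimark complement of $\Phi$ is any $\Psi=\{\psi_i\}_{i=1}^M\subseteq\mathbb{F}^{M-N}$ with $\Psi^*\Psi=I-\Phi^*\Phi$. For $K\subseteq[M]$, $\Phi_K$ is the submatrix of columns indexed by $K$. For a matrix $F$ of size $n\times m$, $\sigma_1(F)\ge\sigma_2(F)\ge\dots\ge\sigma_{\min\{n,m\}}(F)$ denote its singular values in decreasing order. *)

(* Field F is modelled by an arbitrary numClosedFieldType C
   (e.g. algC, or complex R for R : rcfType); the real case F = R is the
   sub-case where all entries are real (see the `realF` flag in the theorem). *)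
From HB Require Import structures.
From mathcomp Require Import all_boot all_order all_algebra.
Set Implicit Arguments. Unset Strict Implicit. Unset Printing Implicit Defensive.
Import Order.TTheory GRing.Theory Num.Theory.
Local Open Scope ring_scope.

Section SV.
Variable C : numClosedFieldType.

Definition adjmx (m n : nat) (A : 'M[C]_(m, n)) : 'M[C]_(n, m) :=
  (map_mx (fun z => z^*) A)^T.

Lemma eigs_ex (n : nat) (A : 'M[C]_n) :
  exists s : seq C, char_poly A == \prod_(x <- s) ('X - x%:P).
Proof.
have [s Hs] := closed_field_poly_normal (char_poly A).
exists s; apply/eqP; rewrite {1}Hs.
by have /monicP -> := char_poly_monic A; rewrite scale1r.
Qed.

Definition eigs (n : nat) (A : 'M[C]_n) : seq C := xchoose (eigs_ex A).

Definition sing_vals (n m : nat) (F : 'M[C]_(n, m)) : seq C :=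
  take (minn n m) (map sqrtC (sort (fun x y => y <= x) (eigs (adjmx F *m F)))).

(* sigma F i = sigma_i(F), 1-indexed (meaningful for 1 <= i <= min n m) *)
Definition sigma (n m : nat) (F : 'M[C]_(n, m)) (i : nat) : C :=
  nth 0 (sing_vals F) i.-1.

Definition colsK (n M : nat) (K : {set 'I_M}) (F : 'M[C]_(n, M)) : 'M[C]_(n, #|K|) :=
  colsub (fun j : 'I_#|K| => enum_val j) F.

Definition parseval (N M : nat) (Phi : 'M[C]_(N, M)) : Prop :=
  Phi *m adjmx Phi = 1%:M.

Definition naimark_complement (N M : nat) (Phi : 'M[C]_(N, M))
  (Psi : 'M[C]_(M - N, M)) : Prop :=
  adjmx Psi *m Psi = 1%:M - adjmx Phi *m Phi.

End SV.

From HB Require Import structures.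
From mathcomp Require Import all_boot all_order all_algebra.
From mathcomp Require Import zify ring.
Set Implicit Arguments. Unset Strict Implicit. Unset Printing Implicit Defensive.
Import Order.TTheory GRing.Theory Num.Theory.
Local Open Scope ring_scope.

(* Write P = Phi_K, Pc = Phi_(K^c) and R = Psi_(K^c).  Parseval gives
   P P^* + Pc Pc^* = 1 and the Naimark relation gives Pc^* Pc + R^* R = 1
   (and P^* P + Psi_K^* Psi_K = 1), so all these spectra lie in [0, 1].
   Since A B and B A have the same eigenvalues up to zeros, passing from
   P^* P to P P^*, then to Pc Pc^* = 1 - P P^*, to Pc^* Pc, and finally to
   R^* R = 1 - Pc^* Pc yields the multiset identity
     spec (R^* R) + {1^N} = {1^(M-k)} + spec (P^* P) + {0^(N-k)}.
   Sorting both sides decreasingly and comparing entries, then taking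
   square roots, gives the singular values of R in terms of those of P. *)

Section Adjoint.
Variable C : numClosedFieldType.
Local Open Scope sesquilinear_scope.

Lemma adjmxE m n (A : 'M[C]_(m, n)) : adjmx A = A ^t*.
Proof. exact: map_trmx. Qed.

Lemma adjmxM m n p (A : 'M[C]_(m, n)) (B : 'M[C]_(n, p)) :
  adjmx (A *m B) = adjmx B *m adjmx A.
Proof. by rewrite !adjmxE trmx_mul map_mxM. Qed.

Lemma adjmxK m n (A : 'M[C]_(m, n)) : adjmx (adjmx A) = A.
Proof. by rewrite !adjmxE trmxCK. Qed.

Lemma dotmx_adjmx n (u : 'rV[C]_n) : dotmx u u = (u *m adjmx u) 0 0.
Proof. by rewrite dotmxE adjmxE. Qed.

End Adjoint.

Section Eigenvalues.
Variable C : numClosedFieldType.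

Lemma eigsP n (A : 'M[C]_n) : char_poly A = \prod_(x <- eigs A) ('X - x%:P).
Proof. exact/eqP/(xchooseP (eigs_ex A)). Qed.

Lemma size_eigs n (A : 'M[C]_n) : size (eigs A) = n.
Proof. by have := size_char_poly A; rewrite eigsP size_prod_XsubC => -[]. Qed.

Lemma perm_eigs n (A : 'M[C]_n) s :
  char_poly A = \prod_(x <- s) ('X - x%:P) -> perm_eq (eigs A) s.
Proof. by rewrite eigsP => /prod_XsubC_eq. Qed.

Lemma mem_eigs n (A : 'M[C]_n) x : (x \in eigs A) = eigenvalue A x.
Proof. by rewrite eigenvalue_root_char eigsP root_prod_XsubC. Qed.

(* Both sides are det [['X, A], [B, 1]], computed by eliminating either
   off-diagonal block. *)
Lemma char_poly_mulmxC m n (A : 'M[C]_(m, n)) (B : 'M[C]_(n, m)) :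
  char_poly (A *m B) * 'X^n = char_poly (B *m A) * 'X^m.
Proof.
pose a := map_mx polyC A; pose b := map_mx polyC B.
pose D := \det (block_mx ('X%:M : 'M_m) a b (1%:M : 'M_n)).
have eAB : block_mx 1%:M (- a) 0 'X%:M *m block_mx 'X%:M a b 1%:M
         = block_mx (char_poly_mx (A *m B)) 0 ('X *: b) ('X%:M : 'M_n).
  rewrite mulmx_block /char_poly_mx map_mxM -/a -/b !mul1mx !mul0mx !add0r.
  by rewrite !mulmx1 mulNmx addrN mul_scalar_mx.
have eBA : block_mx 1%:M 0 (- b) 'X%:M *m block_mx ('X%:M : 'M_m) a b 1%:M
         = block_mx 'X%:M a 0 (char_poly_mx (B *m A)).
  rewrite mulmx_block /char_poly_mx map_mxM -/a -/b !mul1mx !mul0mx !addr0.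
  by rewrite !mulmx1 !mulNmx mul_mx_scalar mul_scalar_mx addNr addrC.
have := congr1 determinant eAB.
rewrite det_mulmx det_ublock det1 mul1r det_lblock det_scalar -/D => dAB.
have := congr1 determinant eBA.
rewrite det_mulmx det_lblock det1 mul1r det_ublock !det_scalar -/D => dBA.
by rewrite /char_poly -dAB dBA mulrC.
Qed.

Lemma perm_eigs_mulmxC m n (A : 'M[C]_(m, n)) (B : 'M[C]_(n, m)) :
  perm_eq (eigs (A *m B) ++ nseq n 0) (eigs (B *m A) ++ nseq m 0).
Proof.
have prod_nseq0 (s : seq C) k :
    \prod_(x <- s ++ nseq k 0) ('X - x%:P) = \prod_(x <- s) ('X - x%:P) * 'X^k.
  by rewrite big_cat big_nseq polyC0 subr0 iter_mulr_1.
by apply: prod_XsubC_eq; rewrite !prod_nseq0 -!eigsP char_poly_mulmxC.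
Qed.

Lemma perm_eigs_mulmxC_le m n (A : 'M[C]_(m, n)) (B : 'M[C]_(n, m)) :
  (n <= m)%N -> perm_eq (eigs (A *m B)) (eigs (B *m A) ++ nseq (m - n) 0).
Proof.
move=> nm; rewrite -(perm_cat2r (nseq n 0)) -catA -nseqD subnK //.
exact: perm_eigs_mulmxC.
Qed.

Lemma perm_eigs_1submx n (A : 'M[C]_n) :
  perm_eq (eigs (1%:M - A)) (map (fun x => 1 - x) (eigs A)).
Proof.
apply: perm_eigs; rewrite big_map /char_poly.
have -> : char_poly_mx (1%:M - A) = - map_mx (comp_poly (1 - 'X)) (char_poly_mx A).
  apply/matrixP => i j; rewrite !mxE; case: eqP => _ /=.
    by rewrite mulr1n comp_polyB comp_polyX comp_polyC polyCB polyC1; ring.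
  by rewrite mulr0n comp_polyB comp_polyC comp_poly0 polyCB polyC0; ring.
rewrite -scaleN1r detZ det_map_mx -/(char_poly A) eigsP rmorph_prod /=.
rewrite -[in (-1) ^+ _](size_eigs A) -count_predT -iter_mulr_1 -big_const_seq.
rewrite -big_split /=.
by apply: eq_bigr => x _; rewrite comp_polyB comp_polyX comp_polyC polyCB polyC1; ring.
Qed.

End Eigenvalues.

Section GramSpectrum.
Variable C : numClosedFieldType.

Lemma eigs_gram_itv k p q (P : 'M[C]_(p, k)) (Q : 'M[C]_(q, k)) :
  adjmx P *m P + adjmx Q *m Q = 1%:M ->
  all (fun x => x \in `[0, 1]) (eigs (adjmx P *m P)).
Proof.
move=> PQ1; apply/allP => x; rewrite mem_eigs => /eigenvalueP[v vPx v_neq0].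
have gramE r (R : 'M[C]_(r, k)) :
    (v *m (adjmx R *m R) *m adjmx v) 0 0 = dotmx (v *m adjmx R) (v *m adjmx R).
  by rewrite dotmx_adjmx adjmxM adjmxK !mulmxA.
have normP : x * dotmx v v = dotmx (v *m adjmx P) (v *m adjmx P).
  by rewrite -gramE vPx -scalemxAl mxE dotmx_adjmx.
have normPQ :
    dotmx v v = dotmx (v *m adjmx P) (v *m adjmx P) + dotmx (v *m adjmx Q) (v *m adjmx Q).
  have := congr1 (fun G => (v *m G *m adjmx v) 0 0) PQ1.
  by rewrite /= mulmxDr mulmxDl mxE !gramE mulmx1 -dotmx_adjmx => <-.
have v_gt0 : 0 < dotmx v v by rewrite dnorm_gt0.
rewrite in_itv /=; apply/andP; split.
  by rewrite -(pmulr_lge0 _ v_gt0) normP dnorm_ge0.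
by rewrite -(ler_pM2r v_gt0) mul1r normP [leRHS]normPQ lerDl dnorm_ge0.
Qed.

End GramSpectrum.

Lemma nth_nseq_cat T (x0 x : T) a s i :
  nth x0 (nseq a x ++ s) i = if (i < a)%N then x else nth x0 s (i - a).
Proof. by rewrite nth_cat size_nseq nth_nseq; case: ltnP. Qed.

Lemma nth_nseq_cat_addn T (x0 x : T) a s i : nth x0 (nseq a x ++ s) (a + i) = nth x0 s i.
Proof. by rewrite nth_nseq_cat ltnNge leq_addr addKn. Qed.

Lemma nth_cat_nseq_default T (x0 : T) s c i : nth x0 (s ++ nseq c x0) i = nth x0 s i.
Proof. by rewrite nth_cat nth_nseq if_same; case: ltnP => // /(nth_default x0). Qed.

Section SortedSpectra.
Variable C : numClosedFieldType.
Local Notation ge := (fun x y : C => y <= x).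

Lemma sorted_ge_ones_sort_zeros a b (s : seq C) :
  all (fun x => x \in `[0, 1]) s -> sorted ge (nseq a 1 ++ sort ge s ++ nseq b 0).
Proof.
move=> s01; have ss01 : all (fun x => x \in `[0, 1]) (sort ge s) by rewrite all_sort.
have total_ge : {in fun x => x \in `[0, 1] &, total ge}.
  by move=> x y x01 y01; rewrite /= orbC real_leVge ?ger0_real ?(itvP x01) ?(itvP y01).
rewrite (sorted_pairwise (leT := ge) ge_trans) !pairwise_cat !allrel_catr.
have const_pairwise (x : C) n : pairwise ge (nseq n x).
  by elim: n => //= n ->; rewrite all_nseq lexx orbT.
rewrite !const_pairwise -(sorted_pairwise (leT := ge) ge_trans).
rewrite (sort_sorted_in total_ge) //=.
rewrite !andbT -andbA; apply/and3P; split.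
- by apply/allrelP => x y /nseqP[-> _] /(allP ss01); rewrite in_itv => /andP[].
- by apply/allrelP => x y /nseqP[-> _] /nseqP[-> _]; rewrite ler01.
- by apply/allrelP => x y /(allP ss01); rewrite in_itv => /andP[? _] /nseqP[-> _].
Qed.

Lemma sort_ge_ones_zeros a b c (s t : seq C) :
  all (fun x => x \in `[0, 1]) s -> all (fun x => x \in `[0, 1]) t ->
  perm_eq (nseq a 1 ++ s) (nseq b 1 ++ t ++ nseq c 0) ->
  nseq a 1 ++ sort ge s = nseq b 1 ++ sort ge t ++ nseq c 0.
Proof.
move=> s01 t01 st; apply: (sorted_eq ge_trans ge_anti).
- by have := sorted_ge_ones_sort_zeros a 0 s01; rewrite cats0.
- exact: sorted_ge_ones_sort_zeros.
apply: perm_trans (perm_trans _ st) _; first by rewrite perm_cat2l perm_sort.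
by rewrite perm_cat2l perm_cat2r perm_sym perm_sort.
Qed.

(* No bound by the number of columns is needed: beyond it both sides are 0. *)
Lemma sigma_sort_eigs n m (F : 'M[C]_(n, m)) i : (i < n)%N ->
  sigma F i.+1 = sqrtC (nth 0 (sort ge (eigs (adjmx F *m F))) i).
Proof.
rewrite /sigma /sing_vals /= => lt_in; have [lt_im|le_mi] := ltnP i m.
  by rewrite nth_take ?(nth_map 0) ?size_sort ?size_eigs //; lia.
by rewrite !nth_default ?sqrtC0 ?size_take_min ?size_map ?size_sort ?size_eigs //;
  lia.
Qed.

End SortedSpectra.

Section NaimarkSpectrum.
Variables (C : numClosedFieldType) (N k m q : nat).
Variables (P : 'M[C]_(N, k)) (Pc : 'M[C]_(N, m)) (Q : 'M[C]_(q, k)) (R : 'M[C]_(q, m)).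
Hypothesis le_kN : (k <= N)%N.
Hypothesis frame_PPc : P *m adjmx P + Pc *m adjmx Pc = 1%:M.
Hypothesis gram_PQ : adjmx P *m P + adjmx Q *m Q = 1%:M.
Hypothesis gram_PcR : adjmx Pc *m Pc + adjmx R *m R = 1%:M.
Local Notation ge := (fun x y : C => y <= x).
Local Notation compl := (map (fun x : C => 1 - x)).

Lemma perm_eigs_naimark :
  perm_eq (nseq N 1 ++ eigs (adjmx R *m R))
          (nseq m 1 ++ eigs (adjmx P *m P) ++ nseq (N - k) 0).
Proof.
have complK s : compl (compl s) = s.
  by rewrite -map_comp map_id_in // => x _ /=; rewrite subKr.
have compl0 n : compl (nseq n 0) = nseq n 1 by rewrite map_nseq subr0.
have gramR : adjmx R *m R = 1%:M - adjmx Pc *m Pc.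
  by rewrite -gram_PcR addrAC subrr add0r.
have framePc : Pc *m adjmx Pc = 1%:M - P *m adjmx P.
  by rewrite -frame_PPc addrAC subrr add0r.
have eigsR : perm_eq (eigs (adjmx R *m R)) (compl (eigs (adjmx Pc *m Pc))).
  by rewrite gramR perm_eigs_1submx.
have eigsPc : perm_eq (eigs (Pc *m adjmx Pc)) (compl (eigs (P *m adjmx P))).
  by rewrite framePc perm_eigs_1submx.
rewrite perm_catC; apply: perm_trans (perm_cat eigsR (perm_refl _)) _.
rewrite -compl0 -map_cat; apply: perm_trans (perm_map _ (perm_eigs_mulmxC _ _)) _.
rewrite map_cat compl0 perm_catC perm_cat2l.
apply: perm_trans (perm_map _ eigsPc) _; rewrite complK.
exact: perm_eigs_mulmxC_le.
Qed.

Lemma sort_eigs_naimark :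
  nseq N 1 ++ sort ge (eigs (adjmx R *m R)) =
  nseq m 1 ++ sort ge (eigs (adjmx P *m P)) ++ nseq (N - k) 0.
Proof.
apply: sort_ge_ones_zeros; last exact: perm_eigs_naimark.
  by apply: (eigs_gram_itv (Q := Pc)); rewrite addrC.
exact: eigs_gram_itv gram_PQ.
Qed.

Lemma sigma_naimark_compl i : (i < q)%N -> (i < m)%N ->
  sigma R i.+1 = if (N + i < m)%N then 1 else sigma P (N + i - m).+1.
Proof.
move=> lt_iq lt_im; rewrite sigma_sort_eigs //.
rewrite -(nth_nseq_cat_addn 0 1 N) sort_eigs_naimark nth_nseq_cat.
case: ifP => [_|/negbT ge_Nim]; first by rewrite sqrtC1.
by rewrite nth_cat_nseq_default sigma_sort_eigs //; lia.
Qed.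

Lemma sigma_naimark_ones i : (m + i < N)%N -> sigma P i.+1 = 1.
Proof.
move=> lt_miN; rewrite sigma_sort_eigs; last by lia.
rewrite -(nth_cat_nseq_default _ _ (N - k)) -(nth_nseq_cat_addn 0 1 m).
by rewrite -sort_eigs_naimark nth_nseq_cat lt_miN sqrtC1.
Qed.

End NaimarkSpectrum.

Section ColumnSubmatrices.
Variables (C : numClosedFieldType) (M : nat) (K : {set 'I_M}).

Lemma gram_colsK n (F : 'M[C]_(n, M)) :
  adjmx (colsK K F) *m colsK K F = mxsub enum_val enum_val (adjmx F *m F).
Proof. by apply/matrixP => i j; rewrite !mxE; apply: eq_bigr => r _; rewrite !mxE. Qed.

Lemma naimark_gram_colsK n (Phi : 'M[C]_(n, M)) (Psi : 'M[C]_(M - n, M)) :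
  naimark_complement Phi Psi ->
  adjmx (colsK K Phi) *m colsK K Phi + adjmx (colsK K Psi) *m colsK K Psi = 1%:M.
Proof.
rewrite /naimark_complement !gram_colsK => naimark.
rewrite -linearD naimark addrC subrK.
by apply/matrixP => i j; rewrite !mxE (inj_eq enum_val_inj).
Qed.

Lemma frame_op_colsK_setC n (F : 'M[C]_(n, M)) :
  colsK K F *m adjmx (colsK K F) + colsK (~: K) F *m adjmx (colsK (~: K) F) =
  F *m adjmx F.
Proof.
apply/matrixP => a b; rewrite !mxE.
have sum_colsK (A : {set 'I_M}) :
    \sum_(t < #|A|) colsK A F a t * adjmx (colsK A F) t b =
    \sum_(x in A) F a x * (F b x)^*.
  by rewrite (big_enum_val (A := mem A)); apply: eq_bigr => t _; rewrite !mxE.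
rewrite !sum_colsK [in RHS](bigID (mem K)) /=; congr (_ + _).
  by apply: eq_big => [x|x _]; rewrite ?mxE.
by apply: eq_big => [x|x _]; rewrite ?mxE ?in_setC.
Qed.

End ColumnSubmatrices.

Theorem proposition13 (C : numClosedFieldType) (realF : bool) (N M : nat)
  (Phi : 'M[C]_(N, M)) (Psi : 'M[C]_(M - N, M)) (K : {set 'I_M}) :
  (N < M)%N ->
  (realF -> (forall i j, Phi i j \is Num.real) /\ (forall i j, Psi i j \is Num.real)) ->
  parseval Phi ->
  naimark_complement Phi Psi ->
  (#|K| <= N)%N ->
  ((#|K| <= M - N)%N ->
     forall i : nat, (1 <= i <= M - N)%N ->
       sigma (colsK (~: K) Psi) i =
         (if (i <= M - N - #|K|)%N then 1 else sigma (colsK K Phi) (i - (M - N - #|K|))))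
  /\
  ((M - N < #|K|)%N ->
     (forall i : nat, (1 <= i <= #|K| - (M - N))%N -> sigma (colsK K Phi) i = 1)
     /\ (forall i : nat, (1 <= i <= M - N)%N ->
           sigma (colsK (~: K) Psi) i = sigma (colsK K Phi) (i + (#|K| - (M - N))))).
Proof.
(* Neither [N < M] nor real entries are needed; the real case is a special case. *)
move=> _ _ parseval_Phi naimark le_kN.
have card_KC : #|~: K| = (M - #|K|)%N by have := cardsC K; rewrite card_ord; lia.
have frame : colsK K Phi *m adjmx (colsK K Phi) +
             colsK (~: K) Phi *m adjmx (colsK (~: K) Phi) = 1%:M.
  by rewrite frame_op_colsK_setC; exact: parseval_Phi.
have gram_K := naimark_gram_colsK K naimark.
have gram_KC := naimark_gram_colsK (~: K) naimark.
have sigma_compl := sigma_naimark_compl le_kN frame gram_K gram_KC.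
have sigma_ones := sigma_naimark_ones le_kN frame gram_K gram_KC.
split => [le_kMN i /andP[i_gt0 le_iMN] | lt_MNk].
  rewrite -(prednK i_gt0) sigma_compl; [|lia..].
  by case: ifP; case: ifP => // *; first [lia | congr sigma; lia].
split => i /andP[i_gt0 le_i].
  by rewrite -(prednK i_gt0) sigma_ones //; lia.
rewrite -(prednK i_gt0) sigma_compl ?ifF; [by congr sigma; lia | lia..].
Qed.
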